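(* Let $f:\mathcal C_n\to\mathbb R$ with $\mathrm{Lip}(f)=L$, and let $h:\mathbb R\to\mathbb R$ be twice differentiable with $|h''(x)|<B$ for all $x$. Then: (1) for every $y\in\mathcal C_n$, $$\|\nabla(h\circ f)(y)-h'(f(y))\nabla f(y)\|_1\le BL^2n\quad\text{and}\quad\|\nabla(h\circ f)(y)-h'(f(y))\nabla f(y)\|_2\le BL^2\sqrt n;$$ (2) for every $x\in[-1,1]^n$, $$\|\nabla(h\circ f)(x)-h'(f(x))\nabla f(x)\|_1\le2BL^2n^{3/2},$$ where $f(x)$, $\nabla f(x)$ and $\nabla(h\circ f)(x)$ denote the harmonic extensions.
   Context: Notation. $\mathcal C_n=\{-1,1\}^n$. Discrete calculus. $\partial_ig(y)=\tfrac12\big(g(y^{i\to1})-g(y^{i\to-1})\big)$, where $y^{i\to\pm1}$ is $y$ with its $i$-th coordinate set to $\pm1$. $\nabla g=(\partial_1g,\dots,\partial_ng)$ and $\mathrm{Lip}(g)=\max_{i,y}|\partial_ig(y)|$. Harmonic extension. Any $g:\mathcal C_n\to\mathbb R$, including each $\partial_ig$, is extended to $[-1,1]^n$ by its unique multilinear polynomial $\sum_{S}\hat g(S)\prod_{i\in S}x_i$. *)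

From Stdlib Require Import Reals Lra List.
Import ListNotations.
Open Scope R_scope.

(* Points of R^n are represented as lists of reals of length n. *)

Definition sumR (l : list R) : R := fold_right Rplus 0 l.

Fixpoint cube (n : nat) : list (list R) :=
  match n with
  | O => [ [] ]
  | S m => map (cons 1) (cube m) ++ map (cons (-1)) (cube m)
  end.

(* Subsets S of {0,...,n-1}, encoded as boolean lists of length n. *)
Fixpoint subsets (n : nat) : list (list bool) :=
  match n with
  | O => [ [] ]
  | S m => map (cons true) (subsets m) ++ map (cons false) (subsets m)
  end.

Fixpoint chi (S : list bool) (x : list R) : R :=
  match S, x with
  | b :: S', xi :: x' => (if b then xi else 1) * chi S' x'
  | _, _ => 1
  end.

Definition fourier (n : nat) (g : list R -> R) (S : list bool) : R :=
  / (2 ^ n) * sumR (map (fun y => g y * chi S y) (cube n)).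

Definition harm (n : nat) (g : list R -> R) (x : list R) : R :=
  sumR (map (fun S => fourier n g S * chi S x) (subsets n)).

Fixpoint upd (y : list R) (i : nat) (a : R) : list R :=
  match y, i with
  | [], _ => []
  | _ :: y', O => a :: y'
  | c :: y', S j => c :: upd y' j a
  end.

Definition dpart (i : nat) (g : list R -> R) (y : list R) : R :=
  (g (upd y i 1) - g (upd y i (-1))) / 2.

(* Lip(g) = max_{i,y} |d_i g(y)|  (taken to be 0 when n = 0). *)
Definition Lip (n : nat) (g : list R -> R) : R :=
  fold_right Rmax 0
    (flat_map (fun i => map (fun y => Rabs (dpart i g y)) (cube n)) (seq 0 n)).

Definition in_box (n : nat) (x : list R) : Prop :=
  length x = n /\ Forall (fun t => -1 <= t <= 1) x.

From Stdlib Require Import Reals Lra Lia List.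
Import ListNotations.
Open Scope R_scope.

(* On the cube, [y] is one of the two endpoints of the edge defining [dpart i], so
   [dpart i (h o f) y - h'(f y) dpart i f y] is a second-order Taylor remainder over
   a step of length [2 |dpart i f y| <= 2L], of size at most [B L^2].

   Inside the box, the harmonic extension at [x] is the expectation under the product
   measure on the cube with means [x_i]. The defect at [x] is then an average of the
   defects at cube points, but with [h'] evaluated at the mean [c] of [f] rather than at
   [f y]; since [h'] is [B]-Lipschitz this costs [B L E|f - c|], and
   [E|f - c| <= sqrt (Var f) <= L sqrt n] by an Efron-Stein type variance bound. *)

Lemma sumR_app (l1 l2 : list R) : sumR (l1 ++ l2) = sumR l1 + sumR l2.
Proof. induction l1 as [|a l1 IH]; simpl; [ring | rewrite IH; ring]. Qed.

Lemma sumR_map_scal {A} (c : R) (F : A -> R) (l : list A) :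
  sumR (map (fun s => c * F s) l) = c * sumR (map F l).
Proof. induction l as [|a l IH]; simpl; [ring | rewrite IH; ring]. Qed.

Lemma sumR_map_add {A} (F G : A -> R) (l : list A) :
  sumR (map (fun s => F s + G s) l) = sumR (map F l) + sumR (map G l).
Proof. induction l as [|a l IH]; simpl; [ring | rewrite IH; ring]. Qed.

Lemma sumR_seq_le (F : nat -> R) (M : R) (n : nat) : forall s,
  (forall i, (s <= i < s + n)%nat -> F i <= M) -> sumR (map F (seq s n)) <= INR n * M.
Proof.
  induction n as [|n IH]; intros s HF; [simpl; lra|].
  assert (F s <= M) by (apply HF; lia).
  assert (sumR (map F (seq (S s) n)) <= INR n * M) by (apply IH; intros; apply HF; lia).
  rewrite S_INR. unfold sumR in *. cbn [seq map fold_right]. lra.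
Qed.

Lemma sqrt_sumR_sq_le (F : nat -> R) (M : R) (n : nat) :
  0 <= M -> (forall i, (i < n)%nat -> Rabs (F i) <= M) ->
  sqrt (sumR (map (fun i => F i ^ 2) (seq 0 n))) <= M * sqrt (INR n).
Proof.
  intros HM HF.
  assert (Hsum : sumR (map (fun i => F i ^ 2) (seq 0 n)) <= INR n * M ^ 2).
  { apply sumR_seq_le. intros i Hi. rewrite <- pow2_abs.
    assert (0 <= Rabs (F i)) by apply Rabs_pos.
    assert (Rabs (F i) <= M) by (apply HF; lia). nra. }
  eapply Rle_trans; [apply sqrt_le_1_alt; exact Hsum|].
  rewrite sqrt_mult, sqrt_pow2 by (auto using pos_INR, pow2_ge_0). lra.
Qed.

Lemma n_plus_n_sqrt_le (n : nat) : INR n * (1 + sqrt (INR n)) <= 2 * (INR n * sqrt (INR n)).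
Proof.
  destruct n as [|n]; [simpl; lra|].
  assert (1 <= INR (S n)) by (rewrite S_INR; pose proof (pos_INR n); lra).
  assert (1 <= sqrt (INR (S n))) by (rewrite <- sqrt_1; apply sqrt_le_1_alt; lra).
  nra.
Qed.

Lemma in_cube_cons (n : nat) (a : R) (z : list R) :
  a = 1 \/ a = -1 -> In z (cube n) -> In (a :: z) (cube (S n)).
Proof.
  intros [-> | ->] Hz; simpl; apply in_or_app; [left | right]; apply in_map; exact Hz.
Qed.

Lemma upd_cube_fixed (n : nat) : forall y i,
  In y (cube n) -> (i < n)%nat -> upd y i 1 = y \/ upd y i (-1) = y.
Proof.
  induction n as [|n IH]; intros y i Hy Hi; [lia|].
  simpl in Hy. apply in_app_or in Hy.
  destruct Hy as [Hy|Hy]; apply in_map_iff in Hy; destruct Hy as [z [<- Hz]];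
    destruct i as [|i]; simpl; auto;
    destruct (IH z i Hz ltac:(lia)) as [E|E]; rewrite E; auto.
Qed.

Definition dpart_bounded (n : nat) (g : list R -> R) (L : R) : Prop :=
  forall z i, In z (cube n) -> (i < n)%nat -> Rabs (dpart i g z) <= L.

Lemma dpart_bounded_cons (n : nat) (g : list R -> R) (L a : R) :
  a = 1 \/ a = -1 -> dpart_bounded (S n) g L -> dpart_bounded n (fun z => g (a :: z)) L.
Proof.
  intros Ha Hg z i Hz Hi. exact (Hg (a :: z) (S i) (in_cube_cons n a z Ha Hz) ltac:(lia)).
Qed.

Lemma Lip_nonneg (n : nat) (g : list R -> R) : 0 <= Lip n g.
Proof.
  unfold Lip. induction (flat_map _ _) as [|r l IH]; simpl; [lra|].
  eapply Rle_trans; [exact IH | apply Rmax_r].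
Qed.

Lemma dpart_bounded_Lip (n : nat) (g : list R -> R) : dpart_bounded n g (Lip n g).
Proof.
  intros z i Hz Hi. unfold Lip.
  assert (Hin : In (Rabs (dpart i g z))
            (flat_map (fun i => map (fun y => Rabs (dpart i g y)) (cube n)) (seq 0 n))).
  { apply in_flat_map. exists i. split; [apply in_seq; lia | apply in_map_iff; eauto]. }
  induction (flat_map _ _) as [|r l IH]; simpl in *; [tauto|].
  destruct Hin as [<- | Hin]; [apply Rmax_l|].
  eapply Rle_trans; [exact (IH Hin) | apply Rmax_r].
Qed.

Lemma mvt_between (g g' : R -> R) (Hg : forall t, derivable_pt_lim g t (g' t)) (u v : R) :
  exists xi, g u - g v = g' xi * (u - v) /\ 0 <= (xi - v) * (u - v).
Proof.
  destruct (Rtotal_order u v) as [H|[H|H]].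
  - destruct (MVT_cor2 g g' u v H (fun c _ => Hg c)) as [c [Hc1 Hc2]].
    exists c; split; [lra | nra].
  - subst; exists v; split; [ring | nra].
  - destruct (MVT_cor2 g g' v u H (fun c _ => Hg c)) as [c [Hc1 Hc2]].
    exists c; split; [lra | nra].
Qed.

Lemma le_tangent_of_deriv2_nonpos (g g1 g2 : R -> R)
  (Hg : forall t, derivable_pt_lim g t (g1 t))
  (Hg1 : forall t, derivable_pt_lim g1 t (g2 t))
  (Hg2 : forall t, g2 t <= 0) (u v : R) :
  g u <= g v + g1 v * (u - v).
Proof.
  destruct (mvt_between g g1 Hg u v) as [xi [Exi Hxi]].
  destruct (mvt_between g1 g2 Hg1 xi v) as [eta [Eeta _]].
  pose proof (Hg2 eta). nra.
Qed.

Lemma derivable_pt_lim_sub_monomial (g : R -> R) (l c t : R) (k : nat) :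
  derivable_pt_lim g t l ->
  derivable_pt_lim (fun s => g s - c * s ^ k) t (l - c * (INR k * t ^ pred k)).
Proof.
  intro Hg.
  apply derivable_pt_lim_ext with (f := (g - mult_real_fct c (fun s => s ^ k))%F);
    [intro; reflexivity|].
  apply derivable_pt_lim_minus; [exact Hg|].
  apply derivable_pt_lim_scal, derivable_pt_lim_pow.
Qed.

Lemma taylor_le (h h1 h2 : R -> R) (K : R)
  (Hh1 : forall t, derivable_pt_lim h t (h1 t))
  (Hh2 : forall t, derivable_pt_lim h1 t (h2 t))
  (HK : forall t, h2 t <= K) (u v : R) :
  h u - h v - h1 v * (u - v) <= K / 2 * (u - v) ^ 2.
Proof.
  (* [t |-> h t - K t^2 / 2] has nonpositive second derivative, so lies below its tangent. *)
  assert (Hg : forall t, derivable_pt_lim (fun s => h s - K / 2 * s ^ 2) t (h1 t - K * t)).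
  { intro t. replace (h1 t - K * t) with (h1 t - K / 2 * (INR 2 * t ^ pred 2))
      by (simpl; field).
    apply derivable_pt_lim_sub_monomial, Hh1. }
  assert (Hg1 : forall t, derivable_pt_lim (fun s => h1 s - K * s) t (h2 t - K)).
  { intro t. apply derivable_pt_lim_ext with (f := fun s => h1 s - K * s ^ 1);
      [intro; ring|].
    replace (h2 t - K) with (h2 t - K * (INR 1 * t ^ pred 1)) by (simpl; ring).
    apply derivable_pt_lim_sub_monomial, Hh2. }
  assert (Hg2 : forall t, h2 t - K <= 0) by (intro t; pose proof (HK t); lra).
  pose proof (le_tangent_of_deriv2_nonpos _ _ _ Hg Hg1 Hg2 u v). lra.
Qed.

(* [expect x g] is the mean of [g] when the coordinates of [y] in the cube are independent
   with [P (y_i = 1) = (1 + x_i) / 2], i.e. [E y_i = x_i]. *)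
Fixpoint expect (x : list R) (g : list R -> R) : R :=
  match x with
  | [] => g []
  | a :: x' => (1 + a) / 2 * expect x' (fun z => g (1 :: z))
               + (1 - a) / 2 * expect x' (fun z => g (-1 :: z))
  end.

Definition box (x : list R) : Prop := Forall (fun t => -1 <= t <= 1) x.

Lemma fourier_cons (n : nat) (g : list R -> R) (b : bool) (s : list bool) :
  fourier (S n) g (b :: s) =
  / 2 * (fourier n (fun z => g (1 :: z)) s
         + (if b then -1 else 1) * fourier n (fun z => g (-1 :: z)) s).
Proof.
  unfold fourier. cbn [cube chi]. rewrite map_app, sumR_app, !map_map.
  rewrite (map_ext (fun y => g (1 :: y) * ((if b then 1 else 1) * chi s y))
                   (fun y => g (1 :: y) * chi s y)) by (intro; destruct b; ring).
  rewrite (map_ext (fun y => g (-1 :: y) * ((if b then -1 else 1) * chi s y))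
                   (fun y => (if b then -1 else 1) * (g (-1 :: y) * chi s y))) by (intro; ring).
  rewrite sumR_map_scal. cbn [pow]. rewrite Rinv_mult. ring.
Qed.

Lemma harm_cons (n : nat) (g : list R -> R) (a : R) (x : list R) :
  harm (S n) g (a :: x) =
  (1 + a) / 2 * harm n (fun z => g (1 :: z)) x + (1 - a) / 2 * harm n (fun z => g (-1 :: z)) x.
Proof.
  unfold harm. cbn [subsets]. rewrite map_app, sumR_app, !map_map.
  set (F1 := fun s => fourier n (fun z => g (1 :: z)) s * chi s x).
  set (F2 := fun s => fourier n (fun z => g (-1 :: z)) s * chi s x).
  rewrite (map_ext (fun s => fourier (S n) g (true :: s) * chi (true :: s) (a :: x))
                   (fun s => / 2 * a * F1 s + - / 2 * a * F2 s))
    by (intro; rewrite fourier_cons; unfold F1, F2; cbn [chi]; ring).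
  rewrite (map_ext (fun s => fourier (S n) g (false :: s) * chi (false :: s) (a :: x))
                   (fun s => / 2 * F1 s + / 2 * F2 s))
    by (intro; rewrite fourier_cons; unfold F1, F2; cbn [chi]; ring).
  rewrite !sumR_map_add, !sumR_map_scal. field.
Qed.

Lemma harm_expect (x : list R) : forall g, harm (length x) g x = expect x g.
Proof.
  induction x as [|a x IH]; intro g.
  - unfold harm, fourier. cbn. field.
  - cbn [length]. rewrite harm_cons, !IH. reflexivity.
Qed.

Lemma expect_ext (x : list R) : forall g k, (forall z, g z = k z) -> expect x g = expect x k.
Proof.
  induction x as [|a x IH]; intros g k H; simpl; [apply H|].
  rewrite (IH _ (fun z => k (1 :: z)) (fun z => H (1 :: z))),
          (IH _ (fun z => k (-1 :: z)) (fun z => H (-1 :: z))).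
  reflexivity.
Qed.

Lemma expect_add (x : list R) : forall g k,
  expect x (fun z => g z + k z) = expect x g + expect x k.
Proof.
  induction x as [|a x IH]; intros g k; simpl; [ring|].
  rewrite (IH (fun z => g (1 :: z))), (IH (fun z => g (-1 :: z))). ring.
Qed.

Lemma expect_scal (x : list R) : forall c g, expect x (fun z => c * g z) = c * expect x g.
Proof.
  induction x as [|a x IH]; intros c g; simpl; [ring|].
  rewrite (IH c (fun z => g (1 :: z))), (IH c (fun z => g (-1 :: z))). ring.
Qed.

Lemma expect_const (x : list R) : forall c, expect x (fun _ => c) = c.
Proof. induction x as [|a x IH]; intro c; simpl; [ring|]. rewrite !IH. field. Qed.

Lemma expect_sub (x : list R) (g k : list R -> R) :
  expect x (fun z => g z - k z) = expect x g - expect x k.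
Proof.
  rewrite (expect_ext x _ (fun z => g z + -1 * k z)) by (intro; ring).
  rewrite expect_add, expect_scal. ring.
Qed.

Lemma expect_le (x : list R) : box x -> forall g k,
  (forall z, In z (cube (length x)) -> g z <= k z) -> expect x g <= expect x k.
Proof.
  induction x as [|a x IH]; intros Hb g k H; simpl.
  - apply H. simpl. auto.
  - inversion Hb as [|? ? Ha Hx]; subst.
    assert (expect x (fun z => g (1 :: z)) <= expect x (fun z => k (1 :: z)))
      by (apply IH; auto; intros z Hz; apply H, in_cube_cons; auto).
    assert (expect x (fun z => g (-1 :: z)) <= expect x (fun z => k (-1 :: z)))
      by (apply IH; auto; intros z Hz; apply H, in_cube_cons; auto).
    apply Rplus_le_compat; apply Rmult_le_compat_l; lra.
Qed.

Lemma expect_nonneg (x : list R) (g : list R -> R) : box x ->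
  (forall z, In z (cube (length x)) -> 0 <= g z) -> 0 <= expect x g.
Proof. intros Hb H. rewrite <- (expect_const x 0). apply expect_le; auto. Qed.

Lemma abs_expect_le (x : list R) (g : list R -> R) : box x ->
  Rabs (expect x g) <= expect x (fun z => Rabs (g z)).
Proof.
  intro Hb. apply Rabs_le. split.
  - assert (H : 0 <= expect x (fun z => g z + Rabs (g z))).
    { apply expect_nonneg; auto. intros z _.
      pose proof (Rle_abs (- g z)). rewrite Rabs_Ropp in *. lra. }
    rewrite expect_add in H. lra.
  - apply expect_le; auto. intros z _. apply Rle_abs.
Qed.

Lemma expect_sq_sub (x : list R) (g : list R -> R) (c : R) :
  expect x (fun z => (g z - c) ^ 2) = expect x (fun z => g z ^ 2) - 2 * c * expect x g + c ^ 2.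
Proof.
  rewrite (expect_ext x _ (fun z => g z ^ 2 + (-2 * c * g z + c ^ 2))) by (intro; ring).
  rewrite !expect_add, expect_scal, expect_const. ring.
Qed.

Lemma sq_expect_le (x : list R) (g : list R -> R) : box x ->
  expect x g ^ 2 <= expect x (fun z => g z ^ 2).
Proof.
  intro Hb.
  assert (H : 0 <= expect x (fun z => (g z - expect x g) ^ 2))
    by (apply expect_nonneg; auto; intros; apply pow2_ge_0).
  rewrite expect_sq_sub in H. lra.
Qed.

(* Law of total variance over the first coordinate: the conditional means differ by an
   average of [2 dpart 0 g], and the Bernoulli weight has variance [p q <= 1/4]. *)
Lemma variance_le (x : list R) : box x -> forall g L, dpart_bounded (length x) g L ->
  expect x (fun z => g z ^ 2) - expect x g ^ 2 <= INR (length x) * L ^ 2.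
Proof.
  induction x as [|a x IH]; intros Hb g L HL; [simpl; lra|].
  inversion Hb as [|? ? Ha Hx]; subst. cbn [expect length]. rewrite S_INR.
  set (g1 := fun z => g (1 :: z)). set (g2 := fun z => g (-1 :: z)).
  assert (H1 : expect x (fun z => g1 z ^ 2) - expect x g1 ^ 2 <= INR (length x) * L ^ 2)
    by (apply IH, dpart_bounded_cons; auto).
  assert (H2 : expect x (fun z => g2 z ^ 2) - expect x g2 ^ 2 <= INR (length x) * L ^ 2)
    by (apply IH, dpart_bounded_cons; auto).
  assert (H12 : Rabs (expect x g1 - expect x g2) <= 2 * L).
  { rewrite <- expect_sub, <- (expect_const x (2 * L)).
    eapply Rle_trans; [apply abs_expect_le; auto | apply expect_le; auto].
    intros z Hz. pose proof (HL (1 :: z) 0%nat (in_cube_cons _ _ _ (or_introl eq_refl) Hz)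
                               ltac:(cbn; lia)) as Hd.
    unfold dpart in Hd. cbn [upd] in Hd. unfold g1, g2.
    replace (g (1 :: z) - g (-1 :: z)) with (2 * ((g (1 :: z) - g (-1 :: z)) / 2)) by field.
    rewrite Rabs_mult, Rabs_right by lra. lra. }
  change (expect x (fun z => g (1 :: z) ^ 2)) with (expect x (fun z => g1 z ^ 2)).
  change (expect x (fun z => g (-1 :: z) ^ 2)) with (expect x (fun z => g2 z ^ 2)).
  change (expect x (fun z => g (1 :: z))) with (expect x g1).
  change (expect x (fun z => g (-1 :: z))) with (expect x g2).
  set (m1 := expect x g1) in *. set (m2 := expect x g2) in *.
  set (p := (1 + a) / 2). set (q := (1 - a) / 2).
  assert (Hp : 0 <= p) by (unfold p; lra). assert (Hq : 0 <= q) by (unfold q; lra).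
  assert (Hpq : p * q <= / 4) by (unfold p, q; nra).
  assert (Hm : (m1 - m2) ^ 2 <= 4 * L ^ 2).
  { rewrite <- pow2_abs. pose proof (Rabs_pos (m1 - m2)). nra. }
  assert (Htotal : p * expect x (fun z => g1 z ^ 2) + q * expect x (fun z => g2 z ^ 2)
                   - (p * m1 + q * m2) ^ 2
                   = p * (expect x (fun z => g1 z ^ 2) - m1 ^ 2)
                     + q * (expect x (fun z => g2 z ^ 2) - m2 ^ 2) + p * q * (m1 - m2) ^ 2)
    by (unfold p, q; field).
  assert (p * q * (m1 - m2) ^ 2 <= L ^ 2) by (pose proof (pow2_ge_0 (m1 - m2)); nra).
  assert (p * (expect x (fun z => g1 z ^ 2) - m1 ^ 2) <= p * (INR (length x) * L ^ 2))
    by (apply Rmult_le_compat_l; auto).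
  assert (q * (expect x (fun z => g2 z ^ 2) - m2 ^ 2) <= q * (INR (length x) * L ^ 2))
    by (apply Rmult_le_compat_l; auto).
  assert (p + q = 1) by (unfold p, q; field).
  nra.
Qed.

Lemma expect_abs_dev_le (x : list R) (g : list R -> R) (L : R) :
  box x -> 0 <= L -> dpart_bounded (length x) g L ->
  expect x (fun z => Rabs (g z - expect x g)) <= L * sqrt (INR (length x)).
Proof.
  intros Hb HL0 HL. set (c := expect x g). set (e := expect x (fun z => Rabs (g z - c))).
  assert (He0 : 0 <= e) by (apply expect_nonneg; auto; intros; apply Rabs_pos).
  assert (Hvar : e ^ 2 <= INR (length x) * L ^ 2).
  { eapply Rle_trans; [apply sq_expect_le; exact Hb|].
    rewrite (expect_ext x _ (fun z => (g z - c) ^ 2)) by (intro; apply pow2_abs).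
    rewrite expect_sq_sub. pose proof (variance_le x Hb g L HL) as Hv. fold c in Hv |- *. lra. }
  rewrite <- (sqrt_pow2 e He0), <- (sqrt_pow2 L HL0), <- sqrt_mult
    by (auto using pow2_ge_0, pos_INR).
  apply sqrt_le_1_alt. lra.
Qed.

Section ChainRuleDefect.

Variables (h h1 h2 : R -> R) (B : R).
Hypothesis Hh1 : forall t, derivable_pt_lim h t (h1 t).
Hypothesis Hh2 : forall t, derivable_pt_lim h1 t (h2 t).
Hypothesis HB : forall t, Rabs (h2 t) < B.

Lemma deriv2_bound_pos : 0 < B.
Proof. pose proof (HB 0). pose proof (Rabs_pos (h2 0)). lra. Qed.

Lemma taylor_abs_le (u v : R) : Rabs (h u - h v - h1 v * (u - v)) <= B / 2 * (u - v) ^ 2.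
Proof.
  assert (Hup : forall t, h2 t <= B)
    by (intro t; pose proof (Rle_abs (h2 t)); pose proof (HB t); lra).
  assert (Hdown : forall t, - h2 t <= B)
    by (intro t; pose proof (Rle_abs (- h2 t)); rewrite Rabs_Ropp in *; pose proof (HB t); lra).
  pose proof (taylor_le h h1 h2 B Hh1 Hh2 Hup u v).
  pose proof (taylor_le (fun t => - h t) (fun t => - h1 t) (fun t => - h2 t) B
    (fun t => derivable_pt_lim_opp _ _ _ (Hh1 t)) (fun t => derivable_pt_lim_opp _ _ _ (Hh2 t))
    Hdown u v).
  apply Rabs_le. lra.
Qed.

Lemma taylor_half_step_le (u v : R) :
  Rabs ((h u - h v) / 2 - h1 v * ((u - v) / 2)) <= B * ((u - v) / 2) ^ 2.
Proof.
  replace ((h u - h v) / 2 - h1 v * ((u - v) / 2)) with (/ 2 * (h u - h v - h1 v * (u - v)))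
    by field.
  rewrite Rabs_mult, (Rabs_right (/ 2)) by lra.
  pose proof (taylor_abs_le u v). nra.
Qed.

Lemma deriv_lipschitz (u v : R) : Rabs (h1 u - h1 v) <= B * Rabs (u - v).
Proof.
  destruct (mvt_between h1 h2 Hh2 u v) as [xi [E _]]. rewrite E, Rabs_mult.
  apply Rmult_le_compat_r; [apply Rabs_pos | apply Rlt_le, HB].
Qed.

Variables (n : nat) (f : list R -> R) (L : R).
Hypothesis HfL : dpart_bounded n f L.

Lemma dpart_comp_defect_le (y : list R) (i : nat) : In y (cube n) -> (i < n)%nat ->
  Rabs (dpart i (fun z => h (f z)) y - h1 (f y) * dpart i f y) <= B * L ^ 2.
Proof.
  intros Hy Hi. pose proof (HfL y i Hy Hi) as Hd. pose proof deriv2_bound_pos.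
  unfold dpart in *. set (a := f (upd y i 1)) in *. set (b := f (upd y i (-1))) in *.
  assert (HdL : B * ((a - b) / 2) ^ 2 <= B * L ^ 2).
  { apply Rmult_le_compat_l; [lra|]. rewrite <- pow2_abs.
    pose proof (Rabs_pos ((a - b) / 2)). nra. }
  destruct (upd_cube_fixed n y i Hy Hi) as [E|E].
  - replace (f y) with a by (unfold a; rewrite E; reflexivity).
    replace ((h a - h b) / 2 - h1 a * ((a - b) / 2))
      with (- ((h b - h a) / 2 - h1 a * ((b - a) / 2))) by field.
    rewrite Rabs_Ropp. pose proof (taylor_half_step_le b a) as Ht.
    replace (((b - a) / 2) ^ 2) with (((a - b) / 2) ^ 2) in Ht by (unfold Rdiv; ring). lra.
  - replace (f y) with b by (unfold b; rewrite E; reflexivity).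
    pose proof (taylor_half_step_le a b). lra.
Qed.

Lemma dpart_comp_defect_shift_le (c : R) (y : list R) (i : nat) :
  In y (cube n) -> (i < n)%nat ->
  Rabs (dpart i (fun z => h (f z)) y - h1 c * dpart i f y)
    <= B * L ^ 2 + B * L * Rabs (f y - c).
Proof.
  intros Hy Hi. pose proof (dpart_comp_defect_le y i Hy Hi).
  replace (dpart i (fun z => h (f z)) y - h1 c * dpart i f y) with
    ((dpart i (fun z => h (f z)) y - h1 (f y) * dpart i f y) + (h1 (f y) - h1 c) * dpart i f y)
    by ring.
  eapply Rle_trans; [apply Rabs_triang|]. rewrite Rabs_mult.
  assert (Rabs (h1 (f y) - h1 c) * Rabs (dpart i f y) <= B * Rabs (f y - c) * L).
  { apply Rmult_le_compat; auto using Rabs_pos, deriv_lipschitz. }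
  lra.
Qed.

Lemma harm_comp_defect_le (x : list R) (i : nat) :
  box x -> length x = n -> 0 <= L -> (i < n)%nat ->
  Rabs (harm n (dpart i (fun z => h (f z))) x - h1 (harm n f x) * harm n (dpart i f) x)
    <= B * L ^ 2 * (1 + sqrt (INR n)).
Proof.
  intros Hb Hlen HL0 Hi.
  assert (Hf : dpart_bounded (length x) f L) by (rewrite Hlen; exact HfL).
  rewrite <- Hlen, !harm_expect.
  set (c := expect x f).
  rewrite <- expect_scal, <- expect_sub.
  eapply Rle_trans; [apply abs_expect_le; exact Hb|].
  eapply Rle_trans.
  { apply expect_le with (k := fun z => B * L ^ 2 + B * L * Rabs (f z - c)); auto.
    intros z Hz. rewrite Hlen in Hz. apply dpart_comp_defect_shift_le; assumption. }
  rewrite expect_add, expect_const, expect_scal.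
  pose proof (expect_abs_dev_le x f L Hb HL0 Hf) as Hdev. fold c in Hdev.
  assert (0 <= B * L) by (pose proof deriv2_bound_pos; nra).
  nra.
Qed.

End ChainRuleDefect.

Theorem mainTheorem10 (n : nat) (f : list R -> R) (L : R)
  (h h1 h2 : R -> R) (B : R)
  (HL : Lip n f = L)
  (Hh1 : forall x, derivable_pt_lim h x (h1 x))
  (Hh2 : forall x, derivable_pt_lim h1 x (h2 x))
  (HB : forall x, Rabs (h2 x) < B) :
  (forall y, In y (cube n) ->
     sumR (map (fun i => Rabs (dpart i (fun z => h (f z)) y - h1 (f y) * dpart i f y))
               (seq 0 n)) <= B * L ^ 2 * INR n
     /\
     sqrt (sumR (map (fun i => (dpart i (fun z => h (f z)) y - h1 (f y) * dpart i f y) ^ 2)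
               (seq 0 n))) <= B * L ^ 2 * sqrt (INR n))
  /\
  (forall x, in_box n x ->
     sumR (map (fun i => Rabs (harm n (dpart i (fun z => h (f z))) x
                               - h1 (harm n f x) * harm n (dpart i f) x))
               (seq 0 n)) <= 2 * B * L ^ 2 * (INR n * sqrt (INR n))).
Proof.
  pose proof (dpart_bounded_Lip n f) as HfL. rewrite HL in HfL.
  assert (HL0 : 0 <= L) by (rewrite <- HL; apply Lip_nonneg).
  assert (HBL : 0 <= B * L ^ 2)
    by (pose proof (deriv2_bound_pos h2 B HB); pose proof (pow2_ge_0 L); nra).
  split.
  - intros y Hy. split.
    + rewrite Rmult_comm. apply sumR_seq_le. intros i Hi.
      apply (dpart_comp_defect_le h h1 h2 B Hh1 Hh2 HB n f L HfL); [exact Hy | lia].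
    + apply sqrt_sumR_sq_le; [exact HBL|]. intros i Hi.
      apply (dpart_comp_defect_le h h1 h2 B Hh1 Hh2 HB n f L HfL); assumption.
  - intros x [Hlen Hb]. eapply Rle_trans.
    + apply sumR_seq_le. intros i Hi.
      apply (harm_comp_defect_le h h1 h2 B Hh1 Hh2 HB n f L HfL x i Hb Hlen HL0); lia.
    + pose proof (n_plus_n_sqrt_le n). nra.
Qed.
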